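(* In the setting below, for all orthogonal modified types $\boldsymbol\mu,\boldsymbol\nu,\boldsymbol\lambda$, the polynomial $r_{\boldsymbol\mu,\boldsymbol\nu}^{\boldsymbol\lambda}\in\mathbb{Q}[x]$ has degree in $x$ at most $2(|\boldsymbol\mu|+|\boldsymbol\nu|-|\boldsymbol\lambda|)$ (so it vanishes if $|\boldsymbol\lambda|>|\boldsymbol\mu|+|\boldsymbol\nu|$).
   Context: $q$ odd prime power. $G_n(\mathbb{F}_q)$ is one of the families $O^+_{2n}$, $O^-_{2n}$, $O_{2n+1}$: the symmetry groups of the symmetric forms $\sum_{i=1}^n(x_{2i-1}y_{2i}+x_{2i}y_{2i-1})$ on $\mathbb{F}_q^{2n}$; $x_1y_1-\epsilon x_2y_2+\sum_{i=2}^n(x_{2i-1}y_{2i}+x_{2i}y_{2i-1})$ on $\mathbb{F}_q^{2n}$ ($\epsilon$ a fixed non-square); $x_1y_1+\sum_{i=1}^n(x_{2i}y_{2i+1}+x_{2i+1}y_{2i})$ on $\mathbb{F}_q^{2n+1}$, respectively, with $G_n\subset G_{n+1}$ via $g\mapsto\operatorname{diag}(g,\mathrm{Id}_2)$. Elements $g\in G_n$, $g'\in G_{n'}$ have the same orthogonal modified type if their images in some common $G_N$ are conjugate in $G_N$; a modified type is such a class, of size $|\boldsymbol\mu|=\operatorname{rank}(g-\mathrm{Id})$. $X_{\boldsymbol\mu,m}$ is the sum of elements of $G_m(\mathbb{F}_q)$ of modified type $\boldsymbol\mu$. $[m]_q=(q^m-1)/(q-1)$. The polynomials $r_{\boldsymbol\mu,\boldsymbol\nu}^{\boldsymbol\lambda}\in\mathbb{Q}[x]$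 are those with $X_{\boldsymbol\mu,m}X_{\boldsymbol\nu,m}=\sum_{\boldsymbol\lambda}r_{\boldsymbol\mu,\boldsymbol\nu}^{\boldsymbol\lambda}([m]_q)X_{\boldsymbol\lambda,m}$ for all $m\ge0$. *)

From HB Require Import structures.
From mathcomp Require Import all_boot all_order all_algebra.
From mathcomp Require Import boolp.
Set Implicit Arguments. Unset Strict Implicit. Unset Printing Implicit Defensive.
Import Order.TTheory GRing.Theory Num.Theory.
Local Open Scope ring_scope.

Inductive ofamily := OPlus | OMinus | OOdd.

Definition odim (fam : ofamily) (n : nat) : nat :=
  match fam with OPlus | OMinus => (2 * n)%N | OOdd => (2 * n).+1 end.

Section Forms.
Variable F : finFieldType.

(* Gram matrices of the forms (0-based indices).
   OPlus : sum_i (x_{2i-1} y_{2i} + x_{2i} y_{2i-1})  (pairs {0,1},{2,3},...)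
   OMinus: x1 y1 - eps x2 y2 + sum_{i>=2} (...)      (pairs {2,3},{4,5},...)
   OOdd  : x1 y1 + sum_i (x_{2i} y_{2i+1} + x_{2i+1} y_{2i}) (pairs {1,2},...) *)
Definition hyp_entry (i j : nat) : F := ((i./2 == j./2) && (i != j))%:R.

Definition gram (eps : F) (fam : ofamily) (n : nat) : 'M[F]_(odim fam n) :=
  \matrix_(i, j)
   match fam with
   | OPlus => hyp_entry i j
   | OMinus =>
       if ((i : nat) < 2)%N || ((j : nat) < 2)%N then
         (if (i == 0%N :> nat) && (j == 0%N :> nat) then 1
          else if (i == 1%N :> nat) && (j == 1%N :> nat) then - eps else 0)
       else hyp_entry i j
   | OOdd =>
       if (i == 0%N :> nat) && (j == 0%N :> nat) then 1
       else if (i == 0%N :> nat) || (j == 0%N :> nat) then 0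
       else hyp_entry i.-1 j.-1
   end.

Definition Ogrp (eps : F) (fam : ofamily) (n : nat) : {set 'M[F]_(odim fam n)} :=
  [set g | g^T *m gram eps fam n *m g == gram eps fam n].

Definition ext_entry (k : nat) (g : 'M[F]_k) (i j : nat) : F :=
  match @insub _ (fun x => (x < k)%N) _ i, @insub _ (fun x => (x < k)%N) _ j with
  | Some i', Some j' => g (i' : 'I_k) (j' : 'I_k)
  | _, _ => (i == j)%:R
  end.

(* The embedding G_n -> G_N, g |-> diag(g, Id) (iterated diag(_, Id_2)). *)
Definition emb (fam : ofamily) (n N : nat) (g : 'M[F]_(odim fam n)) : 'M[F]_(odim fam N) :=
  \matrix_(i, j) ext_entry g i j.

Definition conjugate_in (eps : F) (fam : ofamily) (N : nat) (x y : 'M[F]_(odim fam N)) : Prop :=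
  exists2 h, h \in Ogrp eps fam N & y = invmx h *m x *m h.

Definition same_type (eps : F) (fam : ofamily) (n n' : nat)
    (g : 'M[F]_(odim fam n)) (g' : 'M[F]_(odim fam n')) : Prop :=
  exists N, [/\ (n <= N)%N, (n' <= N)%N &
    @conjugate_in eps fam N (@emb fam n N g) (@emb fam n' N g')].

Definition mtsize (k : nat) (g : 'M[F]_k) : nat := \rank (g - 1%:M).

(* X_{mu,m}, as a function G_m -> Q (element of the group algebra Q[G_m]),
   where mu is represented by g : G_n. *)
Definition Xelt (eps : F) (fam : ofamily) (n : nat) (g : 'M[F]_(odim fam n)) (m : nat)
    (x : 'M[F]_(odim fam m)) : rat :=
  if (x \in Ogrp eps fam m) && `[< same_type eps x g >] then 1 else 0.

Definition conv (eps : F) (fam : ofamily) (m : nat) (f h : 'M[F]_(odim fam m) -> rat)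
    (z : 'M[F]_(odim fam m)) : rat :=
  \sum_(x in Ogrp eps fam m) f x * h (invmx x *m z).

End Forms.

Definition qint (F : finFieldType) (m : nat) : rat :=
  ((#|F|%:R ^+ m - 1) / (#|F|%:R - 1)).

From HB Require Import structures.
From mathcomp Require Import all_boot all_order all_algebra.
From mathcomp Require Import boolp zify lra.
Set Implicit Arguments. Unset Strict Implicit. Unset Printing Implicit Defensive.
Import Order.TTheory GRing.Theory Num.Theory.
Local Open Scope ring_scope.

(* Fix z in G_m of type lambda (lambda itself, embedded). The structure
   constant evaluated at [m]_q counts the x in G_m of type mu with x^-1 z of
   type nu. With A := x - 1 and Y := x^-1 z we have z - 1 = A Y + (Y - 1), so
   |lambda| <= |mu| + |nu|; otherwise r vanishes at infinitely many points.
   The row space of A^T therefore lies in that of (z - 1)^T plus a block E of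
   k := |mu| + |nu| - |lambda| further rows, and x^T B x = B gives
   A = - (x^T B)^-1 A^T B, so the rows of A also lie in those of N B, where N
   stacks a row basis of (z - 1)^T on E. Hence x = 1 + N^T D N B is determined
   by E and a square D of size |lambda| + k, which leaves at most
   q^(k (2m + 1) + (|lambda| + k)^2) = O([m]_q^(2k)) choices for x; a
   polynomial bounded by C X^(2k) along the unbounded sequence [m]_q has
   degree at most 2k. *)


Definition hyp_partner (i : nat) : nat := if odd i then i.-1 else i.+1.

Lemma hyp_partnerE i : hyp_partner i = if (i %% 2 == 1)%N then i.-1 else i.+1.
Proof. by rewrite /hyp_partner modn2; case: (odd i). Qed.

Lemma hyp_partnerK : involutive hyp_partner.
Proof.
move=> i; rewrite (hyp_partnerE i); case: ifP => /eqP ?;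
  by rewrite hyp_partnerE; case: ifP => /eqP ?; lia.
Qed.

Lemma hyp_partner_ge2 i : (2 <= i)%N -> (2 <= hyp_partner i)%N.
Proof. by rewrite hyp_partnerE; case: ifP => /eqP ?; lia. Qed.

Lemma hyp_entryE (F : finFieldType) i j : hyp_entry F i j = (j == hyp_partner i)%:R.
Proof.
rewrite /hyp_entry hyp_partnerE -!divn2; congr (nat_of_bool _)%:R.
by case: ifP => /eqP ?; apply/andP/eqP => [[/eqP ? ?]|->]; try split; apply/eqP; lia.
Qed.

Definition gram_partner (fam : ofamily) (i : nat) : nat :=
  match fam with
  | OPlus => hyp_partner i
  | OMinus => if (i < 2)%N then i else hyp_partner i
  | OOdd => if i is i'.+1 then (hyp_partner i').+1 else 0%N
  end.

Definition gram_coef (F : finFieldType) (eps : F) (fam : ofamily) (i : nat) : F :=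
  if fam is OMinus then (if i == 1%N then - eps else 1) else 1.

Lemma gram_partnerK fam : involutive (gram_partner fam).
Proof.
case: fam => i /=; first exact: hyp_partnerK.
- case: (ltnP i 2) => [->|hi] //.
  by rewrite ltnNge hyp_partner_ge2 //= hyp_partnerK.
- by case: i => [|i] //; rewrite hyp_partnerK.
Qed.

Lemma gram_partner_lt fam n i : (i < odim fam n)%N -> (gram_partner fam i < odim fam n)%N.
Proof.
case: fam => /=; last case: i => [|i] //=.
all: rewrite ?hyp_partnerE; repeat case: ifP => /eqP ? //; lia.
Qed.

Lemma gram_coef_partner (F : finFieldType) (eps : F) fam i :
  gram_coef eps fam (gram_partner fam i) = gram_coef eps fam i.
Proof.
case: fam => //=; case: (ltnP i 2) => // hi.
by rewrite /= (gtn_eqF hi) (gtn_eqF (hyp_partner_ge2 hi)).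
Qed.

Lemma gram_coef_neq0 (F : finFieldType) (eps : F) fam i : eps != 0 -> gram_coef eps fam i != 0.
Proof. by move=> eps0; case: fam => /=; try case: ifP; rewrite ?oppr_eq0 ?oner_neq0. Qed.

Section GramMatrix.
Variables (F : finFieldType) (eps : F) (fam : ofamily).

Lemma gramE n (i j : 'I_(odim fam n)) :
  gram eps fam n i j = if j == gram_partner fam i :> nat then gram_coef eps fam i else 0.
Proof.
rewrite mxE; move: (i : nat) (j : nat) => {}i {}j.
case: fam; rewrite /= ?hyp_entryE.
- by case: eqP.
- case: (ltnP i 2) => hi /=.
    by case: i hi => [|[|]] //; case: j => [|[|]].
  case: (ltnP j 2) => hj /=; last by rewrite (gtn_eqF hi); case: eqP.
  by rewrite (gtn_eqF hi) (gtn_eqF (ltnW hi)) (ltn_eqF (leq_trans hj (hyp_partner_ge2 hi))).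
- by case: i => [|i] /=; case: j => [|j] //=; rewrite eqSS; case: eqP.
Qed.

Lemma tr_gram n : (gram eps fam n)^T = gram eps fam n.
Proof.
apply/matrixP => i j; rewrite mxE !gramE.
have [ij|nij] := eqVneq (i : nat) (gram_partner fam j).
  by rewrite ij gram_partnerK eqxx gram_coef_partner.
by case: eqP => // ji; case/eqP: nij; rewrite ji gram_partnerK.
Qed.

Lemma unitmx_gram n : eps != 0 -> gram eps fam n \in unitmx.
Proof.
move=> eps0.
pose G' : 'M[F]_(odim fam n) :=
  \matrix_(i, j) if j == gram_partner fam i :> nat then (gram_coef eps fam i)^-1 else 0.
suff: gram eps fam n *m G' = 1%:M by case/mulmx1_unit.
apply/matrixP => i j; rewrite !mxE.
pose i' := Ordinal (gram_partner_lt (ltn_ord i)).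
rewrite (bigD1 i') //= big1 => [|k /negbTE ki']; last first.
  by rewrite gramE -val_eqE /= in ki' *; rewrite ki' mul0r.
rewrite gramE !mxE eqxx gram_partnerK gram_coef_partner -val_eqE /= addr0.
by rewrite eq_sym; case: eqP; rewrite ?mulr0 // mulfV ?gram_coef_neq0.
Qed.

End GramMatrix.

Section Inclusion.
Variables (R : nzRingType) (k K : nat).

Definition incl_mx : 'M[R]_(k, K) := \matrix_(i, j) (i == j :> nat)%:R.

Lemma incl_mulmxE r (hk : (k <= K)%N) (Y : 'M[R]_(K, r)) i b :
  (incl_mx *m Y) i b = Y (widen_ord hk i) b.
Proof.
rewrite mxE (bigD1 (widen_ord hk i)) //= big1 => [|j /negbTE ij]; last first.
  by rewrite mxE -val_eqE /= eq_sym in ij *; rewrite ij mul0r.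
by rewrite mxE eqxx mul1r addr0.
Qed.

Lemma tr_incl_mulmxE r (Y : 'M[R]_(k, r)) (i : 'I_K) b :
  (incl_mx^T *m Y) i b = if insub (i : nat) is Some u then Y u b else 0.
Proof.
rewrite mxE; case: insubP => [u _ ui|ik].
  rewrite (bigD1 u) //= big1 => [|j /negbTE uj]; last first.
    by rewrite !mxE -ui val_eqE uj mul0r.
  by rewrite !mxE -ui eqxx mul1r addr0.
rewrite big1 // => j _; rewrite !mxE; case: eqP => [ji|]; last by rewrite mul0r.
by case/negP: ik; rewrite -ji.
Qed.

Lemma mulmx_inclE r (Y : 'M[R]_(r, k)) a (j : 'I_K) :
  (Y *m incl_mx) a j = if insub (j : nat) is Some v then Y a v else 0.
Proof.
rewrite mxE; case: insubP => [v _ vj|jk].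
  rewrite (bigD1 v) //= big1 => [|i /negbTE vi]; last first.
    by rewrite !mxE -vj val_eqE vi mulr0.
  by rewrite !mxE -vj eqxx mulr1 addr0.
rewrite big1 // => i _; rewrite !mxE; case: eqP => [ij|]; last by rewrite mulr0.
by case/negP: jk; rewrite -ij.
Qed.

Lemma incl_mx_trK : (k <= K)%N -> incl_mx *m incl_mx^T = 1%:M.
Proof. by move=> hk; apply/matrixP => i j; rewrite incl_mulmxE !mxE eq_sym. Qed.

End Inclusion.

Lemma incl_mx_id (R : nzRingType) k : incl_mx R k k = 1%:M.
Proof. by apply/matrixP => i j; rewrite !mxE. Qed.

Lemma mxrank_incl_conj (F : fieldType) k K (Y : 'M[F]_k) : (k <= K)%N ->
  \rank ((incl_mx F k K)^T *m Y *m incl_mx F k K) = \rank Y.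
Proof.
move=> kK; have PPt := incl_mx_trK F kK.
rewrite mxrankMfree; last by apply/row_freeP; exists (incl_mx F k K)^T.
by rewrite eqmxMfull //; apply/row_fullP; exists (incl_mx F k K).
Qed.

Lemma trmx_add1_mul_sub (R : comNzRingType) n (X B : 'M[R]_n) :
  (1%:M + X)^T *m B *m (1%:M + X) - B = B *m X + X^T *m B + X^T *m B *m X.
Proof.
rewrite [(1%:M + X)^T]raddfD /= trmx1 !(mulmxDl, mulmxDr) !(mul1mx, mulmx1).
by rewrite addrC !addrA addNr add0r [X^T *m B + _]addrC.
Qed.

Definition orth_param (F : fieldType) n (B z : 'M[F]_n) k (E : 'M[F]_(k, n))
    (D : 'M[F]_(\rank (z - 1%:M)^T + k)) : 'M[F]_n :=
  let N := col_mx (row_base (z - 1%:M)^T) E in 1%:M + N^T *m D *m (N *m B).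
Arguments orth_param {F n} B z {k} E D.

Section OrthogonalParametrization.
Variables (F : fieldType) (n : nat).
Implicit Types (x y z B : 'M[F]_n).

Lemma unitmx_orthogonal B x : B \in unitmx -> x^T *m B *m x = B -> x \in unitmx.
Proof.
by move=> Bu xB; move: Bu; rewrite -{1}xB !unitmx_mul => /andP[/andP[]].
Qed.

Lemma tr_mulmx_subr1_sub x y :
  ((x *m y - 1%:M)^T <= (x - 1%:M)^T + (y - 1%:M)^T)%MS.
Proof.
have -> : x *m y - 1%:M = (x - 1%:M) *m y + (y - 1%:M).
  by rewrite mulmxBl mul1mx addrA subrK.
by rewrite raddfD /= trmx_mul addmx_sub_adds ?submxMl.
Qed.

Lemma sub_col_mx_compl m l k (A : 'M[F]_(m, n)) (W : 'M[F]_(l, n)) :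
  (\rank (A + W)%MS <= \rank W + k)%N -> exists E : 'M[F]_(k, n), (A <= col_mx W E)%MS.
Proof.
move=> rAW; set X := (A :\: W)%MS.
have rX : (\rank X <= k)%N.
  by have := mxrank_cap_compl A W; have := mxrank_sum_cap A W; rewrite -/X; lia.
exists (pid_mx (\rank X) *m row_ebase X).
rewrite -addsmxE -(addsmx_diff_cap_eq A W) addsmxC addsmxS ?capmxSr //.
rewrite -[X in (X <= _)%MS]mulmx_ebase -/X -(@pid_mx_id _ n k n _ rX) mulmxA -mulmxA.
exact: submxMl.
Qed.

Lemma orthogonal_subr1_sub B x : B \in unitmx -> x^T *m B *m x = B ->
  (x - 1%:M <= (x - 1%:M)^T *m B)%MS.
Proof.
move=> Bu xB; have xu := unitmx_orthogonal Bu xB.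
have xBu : x^T *m B \in unitmx by rewrite unitmx_mul unitmx_tr xu.
have xBx : x^T *m B *m (x - 1%:M) = - ((x - 1%:M)^T *m B).
  by rewrite mulmxBr xB mulmx1 raddfB /= trmx1 mulmxBl mul1mx opprB.
rewrite -{1}[x - 1%:M](mulKmx xBu) xBx mulmxN -mulNmx.
exact: submxMl.
Qed.

Lemma mx_factor_through s t m (U : 'M[F]_(s, m)) (V : 'M[F]_(t, n)) (A : 'M[F]_(m, n)) :
  (A^T <= U)%MS -> (A <= V)%MS ->
  A = U^T *m ((pinvmx U)^T *m A *m pinvmx V) *m V.
Proof.
move=> AU AV; have AVV := mulmxKpV AV; have AUU := mulmxKpV AU.
move: (pinvmx U) (pinvmx V) AUU AVV => pU pV AUU AVV.
rewrite -!mulmxA [A *m _]mulmxA AVV mulmxA -trmx_mul.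
by rewrite -[A in RHS]trmxK -trmx_mul mulmxA AUU trmxK.
Qed.

Lemma orthogonal_param B z x k : B \in unitmx -> x^T *m B *m x = B ->
    (\rank (x - 1%:M)%R + \rank (invmx x *m z - 1%:M)%R <= \rank (z - 1%:M)%R + k)%N ->
  exists (E : 'M[F]_(k, n)) D, x = orth_param B z E D.
Proof.
move=> Bu xB rk; have xu := unitmx_orthogonal Bu xB.
set A := x - 1%:M; set W := row_base (z - 1%:M)^T.
have rAW : (\rank (A^T + W)%MS <= \rank W + k)%N.
  have zsub := tr_mulmx_subr1_sub x (invmx x *m z); rewrite mulKVmx // in zsub.
  have : (\rank (A^T + W)%MS <= \rank (A^T + (invmx x *m z - 1%:M)^T)%MS)%N.
    by apply: mxrankS; rewrite addsmx_sub addsmxSl (eq_row_base _).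
  have := (mxrank_adds_leqif A^T (invmx x *m z - 1%:M)^T).1.
  have rW : \rank W = \rank (z - 1%:M) by rewrite (eq_row_base _) mxrank_tr.
  by rewrite !mxrank_tr rW /A; lia.
have [E AE] := sub_col_mx_compl rAW; set N := col_mx W E in AE.
have AN : (A <= N *m B)%MS.
  exact: submx_trans (orthogonal_subr1_sub Bu xB) (submxMr B AE).
exists E, ((pinvmx N)^T *m A *m pinvmx (N *m B)).
by rewrite /orth_param -/W -/N -(mx_factor_through AE AN) addrC subrK.
Qed.

End OrthogonalParametrization.

Lemma mtsize_conj (F : finFieldType) k (h x : 'M[F]_k) : h \in unitmx ->
  mtsize (invmx h *m x *m h) = mtsize x.
Proof.
move=> hu; rewrite /mtsize.
have -> : invmx h *m x *m h - 1%:M = invmx h *m (x - 1%:M) *m h.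
  by rewrite mulmxBr mulmxBl mulmx1 mulVmx.
rewrite mxrankMfree ?row_free_unit //.
by rewrite eqmxMfull // row_full_unit unitmx_inv.
Qed.

Section Embedding.
Variables (F : finFieldType) (eps : F) (fam : ofamily).

Lemma odim_leq n N : (n <= N)%N -> (odim fam n <= odim fam N)%N.
Proof. by case: fam => /=; lia. Qed.

Lemma odim_le_double n : (odim fam n <= 2 * n + 1)%N.
Proof. by case: fam => /=; lia. Qed.

Lemma embE n N (g : 'M[F]_(odim fam n)) :
  emb N g = 1%:M + (incl_mx F (odim fam n) (odim fam N))^T *m (g - 1%:M) *m incl_mx F _ _.
Proof.
apply/matrixP => i j; rewrite [LHS]mxE [RHS]mxE [1%:M i j]mxE mulmx_inclE /ext_entry.
case: insubP => [u _ ui|ik]; case: insubP => [v _ vj|_]; rewrite ?addr0 //.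
  rewrite tr_incl_mulmxE -ui valK !mxE -[u == v]val_eqE ui vj val_eqE.
  by rewrite addrC subrK.
by rewrite tr_incl_mulmxE insubN ?addr0.
Qed.

Section EmbeddingInto.
Variables (n N : nat) (nN : (n <= N)%N).
Let P := incl_mx F (odim fam n) (odim fam N).

Lemma incl_mx_gram : P *m gram eps fam N = gram eps fam n *m P.
Proof.
apply/matrixP => i j; rewrite (incl_mulmxE (odim_leq nN)) mulmx_inclE.
case: insubP => [v _ vj|jn]; first by rewrite !gramE -vj.
rewrite gramE /=; case: eqP => // ji; case/negP: jn.
by rewrite ji gram_partner_lt.
Qed.

Lemma gram_tr_incl_mx : gram eps fam N *m P^T = P^T *m gram eps fam n.
Proof. by apply: trmx_inj; rewrite !trmx_mul !trmxK !tr_gram incl_mx_gram. Qed.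

Lemma gram_conj_incl (A : 'M[F]_(odim fam n)) (X := P^T *m A *m P) :
  let B := gram eps fam N in let Bn := gram eps fam n in
  B *m X + X^T *m B + X^T *m B *m X = P^T *m (Bn *m A + A^T *m Bn + A^T *m Bn *m A) *m P.
Proof.
move=> B Bn; rewrite /X !trmx_mul trmxK -!mulmxA.
have PPt Y : P *m (P^T *m Y) = Y :> 'M_(_, odim fam N).
  by rewrite mulmxA incl_mx_trK ?odim_leq // mul1mx.
have BPt Y : B *m (P^T *m Y) = P^T *m (Bn *m Y) :> 'M_(_, odim fam N).
  by rewrite !mulmxA gram_tr_incl_mx.
rewrite !BPt PPt incl_mx_gram.
by rewrite !(mulmxDl, mulmxDr) !mulmxA.
Qed.

Lemma emb_Ogrp (g : 'M[F]_(odim fam n)) :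
  g \in Ogrp eps fam n -> emb N g \in Ogrp eps fam N.
Proof.
rewrite !inE embE => /eqP gB; apply/eqP/subr0_eq.
rewrite trmx_add1_mul_sub gram_conj_incl -trmx_add1_mul_sub.
by rewrite [1%:M + _]addrC subrK gB subrr mulmx0 mul0mx.
Qed.

Lemma mtsize_emb (g : 'M[F]_(odim fam n)) : mtsize (emb N g) = mtsize g.
Proof. by rewrite /mtsize embE addrC addKr mxrank_incl_conj ?odim_leq. Qed.

End EmbeddingInto.

Lemma emb_id n (g : 'M[F]_(odim fam n)) : emb n g = g.
Proof. by rewrite embE incl_mx_id trmx1 mul1mx mulmx1 addrC subrK. Qed.

Lemma unitmx_Ogrp n (g : 'M[F]_(odim fam n)) : eps != 0 ->
  g \in Ogrp eps fam n -> g \in unitmx.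
Proof.
by move=> eps0; rewrite inE => /eqP; apply: unitmx_orthogonal; apply: unitmx_gram.
Qed.

Lemma same_type_mtsize m n (x : 'M[F]_(odim fam m)) (g : 'M[F]_(odim fam n)) :
  eps != 0 -> same_type eps x g -> mtsize x = mtsize g.
Proof.
move=> eps0 [N [mN nN [h hO e]]].
by rewrite -(mtsize_emb mN) -(mtsize_emb nN) e mtsize_conj ?(unitmx_Ogrp eps0).
Qed.

Lemma same_type_emb n m (g : 'M[F]_(odim fam n)) : (n <= m)%N -> same_type eps (emb m g) g.
Proof.
move=> nm; exists m; split => //; exists 1%:M; last by rewrite emb_id invmx1 mul1mx mulmx1.
by rewrite inE trmx1 mul1mx mulmx1.
Qed.

End Embedding.

Lemma sum_le_card (R : numDomainType) (I : finType) (A T : {pred I}) (f : I -> R) :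
  (forall x, x \in A -> f x <= (x \in T)%:R) -> \sum_(x in A) f x <= #|T|%:R.
Proof.
move=> fT; apply: le_trans (ler_sum _ fT) _.
rewrite -sum1_card natr_sum [X in _ <= X]big_mkcond [X in X <= _]big_mkcond /=.
by apply: ler_sum => x _; do 2 case: (_ \in _).
Qed.

Section ConvolutionBound.
Variables (F : finFieldType) (eps : F) (fam : ofamily) (eps0 : eps != 0).
Variables (a : nat) (mu : 'M[F]_(odim fam a)) (b : nat) (nu : 'M[F]_(odim fam b)).
Variables (m : nat) (z : 'M[F]_(odim fam m)).

Let f x := Xelt eps mu x * Xelt eps nu (invmx x *m z).
Let k := (mtsize mu + mtsize nu - mtsize z)%N.

Lemma Xelt_summand_neq0 x : x \in Ogrp eps fam m -> f x != 0 ->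
  (mtsize z <= mtsize mu + mtsize nu)%N /\
  exists E : 'M[F]_(k, odim fam m), exists D, x = orth_param (gram eps fam m) z E D.
Proof.
rewrite /f /Xelt => xO; case: ifP => [/andP[_ /asboolP xmu]|]; last by rewrite mul0r eqxx.
case: ifP => [/andP[_ /asboolP ynu] _|]; last by rewrite mulr0 eqxx.
have xB : x^T *m gram eps fam m *m x = gram eps fam m by move: xO; rewrite inE => /eqP.
have rz : (mtsize z <= mtsize mu + mtsize nu)%N.
  rewrite -(same_type_mtsize eps0 xmu) -(same_type_mtsize eps0 ynu) /mtsize.
  rewrite -!(mxrank_tr (_ - 1%:M)); apply: leq_trans (mxrankS _) (mxrank_adds_leqif _ _).1.
  by have := tr_mulmx_subr1_sub x (invmx x *m z); rewrite mulKVmx ?(unitmx_Ogrp eps0 xO).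
split=> //; apply: orthogonal_param (unitmx_gram fam m eps0) xB _.
move: rz; rewrite /k -(same_type_mtsize eps0 xmu) -(same_type_mtsize eps0 ynu) /mtsize.
by move=> /subnKC ->.
Qed.

Lemma Xelt_summandE x : f x = (f x != 0)%:R.
Proof. by rewrite /f /Xelt; do 2 case: ifP => _; rewrite ?(mulr1, mulr0, oner_eq0, eqxx). Qed.

Let conv_z := conv eps (Xelt eps mu (m := m)) (Xelt eps nu (m := m)) z.

Lemma conv_Xelt_ge0 : 0 <= conv_z.
Proof. by apply: sumr_ge0 => x _; rewrite -/(f x) Xelt_summandE ler0n. Qed.

Lemma conv_Xelt_eq0 : (mtsize mu + mtsize nu < mtsize z)%N -> conv_z = 0.
Proof.
move=> lt_z; apply: big1 => x xO; apply/eqP; rewrite -/(f x); apply: contraLR lt_z => fx.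
by rewrite -leqNgt; case: (Xelt_summand_neq0 xO fx).
Qed.

Lemma conv_Xelt_le (s := (\rank (z - 1%:M)^T + k)%N) :
  conv_z <= (#|F| ^ (k * odim fam m + s * s))%:R.
Proof.
pose T := [set orth_param (gram eps fam m) z p.1 p.2 | p in [set: 'M[F]_(k, odim fam m) * 'M[F]_s]].
apply: le_trans (@sum_le_card _ _ _ (mem T) _ _) _ => [x xO|].
  rewrite -/(f x) Xelt_summandE ler_nat; case: eqP => //= /eqP fx; rewrite lt0b.
  by have [_ [E [D ->]]] := Xelt_summand_neq0 xO fx; apply/imsetP; exists (E, D).
rewrite ler_nat (leq_trans (leq_imset_card _ _)) //.
by rewrite cardsT card_prod !card_mx expnD.
Qed.

End ConvolutionBound.

Section PolynomialGrowth.
Variable R : realFieldType.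
Implicit Types (r : {poly R}) (xs : nat -> R).

Definition unbounded_seq xs := forall (B : R) (M0 : nat), exists2 m, (M0 <= m)%N & B < xs m.

Lemma poly_norm_ge_lead r : r != 0 ->
  exists2 M, 1 <= M & forall x, M <= x -> `|lead_coef r| / 2 * x ^+ (size r).-1 <= `|r.[x]|.
Proof.
move=> r0; set d := (size r).-1; set lc := `|lead_coef r|.
have sr : size r = d.+1 by rewrite prednK // size_poly_gt0.
have lc_gt0 : 0 < lc by rewrite normr_gt0 lead_coef_eq0.
set S := \sum_(i < d) `|r`_i|.
have S_ge0 : 0 <= S by apply: sumr_ge0.
have SM_ge0 : 0 <= 2 * S / lc by apply: divr_ge0; [apply: mulr_ge0 | apply: ltW].
exists (1 + 2 * S / lc) => [|x Mx]; first lra.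
have Sx : 2 * S <= lc * x by rewrite [lc * x]mulrC -ler_pdivrMr //; lra.
have x_ge0 : 0 <= x by lra.
rewrite horner_coef sr big_ord_recr /= -/d.
set low := \sum_(i < d) _; set X := x ^+ d.
have X_ge0 : 0 <= X by rewrite exprn_ge0.
have lowx : `|low| * x <= S * X.
  apply: le_trans (ler_wpM2r x_ge0 (ler_norm_sum _ _ _)) _.
  rewrite !mulr_suml; apply: ler_sum => i _.
  rewrite normrM normrX (ger0_norm x_ge0) -mulrA -exprSr.
  by rewrite ler_wpM2l // ler_weXn2l //; lra.
have lcX : lc * X - `|low| <= `|low + r`_d * X|.
  have lcE : lc = `|r`_d| by rewrite /lc lead_coefE sr.
  have := lerB_normD (r`_d * X) low.
  rewrite normrM -lcE (ger0_norm X_ge0) [_ + low]addrC; lra.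
nra.
Qed.

Lemma size_poly_le_of_bound r xs (M0 e : nat) (K : R) : r != 0 -> unbounded_seq xs ->
  (forall m, (M0 <= m)%N -> `|r.[xs m]| <= K * xs m ^+ e) -> ((size r).-1 <= e)%N.
Proof.
move=> r0 xs_unb rK; have [M M_ge1 rM] := poly_norm_ge_lead r0.
set lc := `|lead_coef r|; have lc_gt0 : 0 < lc by rewrite normr_gt0 lead_coef_eq0.
have [m M0m xM] := xs_unb (M + `|2 * K / lc|) M0; set x := xs m in xM *.
have KM : 2 * K / lc <= `|2 * K / lc| := ler_norm _.
have Kx : 2 * K < lc * x.
  by rewrite [lc * x]mulrC -ltr_pdivrMr //; have := normr_ge0 (2 * K / lc); lra.
rewrite leqNgt; apply/negP => e_lt.
have x_ge1 : 1 <= x by have := normr_ge0 (2 * K / lc); lra.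
have xe_gt0 : 0 < x ^+ e by rewrite exprn_gt0 //; lra.
have xed : x ^+ e * x <= x ^+ (size r).-1 by rewrite -exprSr ler_weXn2l.
have Mx : M <= x by have := normr_ge0 (2 * K / lc); lra.
have := rM x Mx; have := rK m M0m; rewrite -/x.
have : 0 < x ^+ e * (lc * x - 2 * K) by rewrite mulr_gt0 // subr_gt0.
have : lc * (x ^+ e * x) <= lc * x ^+ (size r).-1 by rewrite ler_wpM2l // ltW.
rewrite -/lc; lra.
Qed.

Lemma poly_eq0_of_roots r xs (M0 : nat) : unbounded_seq xs ->
  (forall m, (M0 <= m)%N -> r.[xs m] = 0) -> r = 0.
Proof.
move=> xs_unb r_roots; apply/eqP/negP => /negP r0.
have [M M_ge1 rM] := poly_norm_ge_lead r0.
have [m M0m xM] := xs_unb M M0.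
have := rM _ (ltW xM); rewrite r_roots // normr0.
have : 0 < `|lead_coef r| by rewrite normr_gt0 lead_coef_eq0.
have : 0 < xs m ^+ (size r).-1 by rewrite exprn_gt0 //; lra.
nra.
Qed.

End PolynomialGrowth.

Section QInteger.
Variable F : finFieldType.
Let q : rat := #|F|%:R.

Lemma card_finField_ge2 : 2 <= q.
Proof. by rewrite ler_nat; apply/card_gt1P; exists 0, 1; rewrite eq_sym oner_neq0. Qed.

Lemma qint_ge m : m%:R <= qint F m.
Proof.
have q2 := card_finField_ge2; rewrite /qint -/q ler_pdivlMr; last lra.
elim: m => [|m IHm]; first by rewrite expr0 subrr mul0r.
have : 1 <= q ^+ m by rewrite exprn_ege1 //; lra.
rewrite exprS -natr1; nra.
Qed.

Lemma qint_unbounded : unbounded_seq (qint F).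
Proof.
move=> B M0; exists (maxn M0 (Num.bound `|B|)); first exact: leq_maxl.
apply: le_lt_trans (ler_norm B) _; apply: lt_le_trans (archi_boundP (normr_ge0 B)) _.
by apply: le_trans (qint_ge _); rewrite ler_nat leq_maxr.
Qed.

Lemma exp_le_mul_qint m : (0 < m)%N -> q ^+ m <= q * qint F m.
Proof.
move=> m_gt0; have q2 := card_finField_ge2.
have qm : (q - 1) * qint F m = q ^+ m - 1 by rewrite /qint mulrC divfK //; lra.
have := qint_ge m; have : 1 <= m%:R :> rat by rewrite ler1n.
lra.
Qed.

Lemma card_exp_le_qint k t m N : (0 < m)%N -> (N <= k * (2 * m + 1) + t)%N ->
  (#|F| ^ N)%:R <= (#|F| ^ (3 * k + t))%:R * qint F m ^+ (2 * k).
Proof.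
move=> m_gt0 hN; have q2 := card_finField_ge2.
rewrite !natrX -/q; apply: le_trans (_ : q ^+ (k * (2 * m + 1) + t) <= _).
  by rewrite ler_weXn2l //; lra.
have -> : (k * (2 * m + 1) + t = (k + t) + m * (2 * k))%N by lia.
have -> : (3 * k + t = (k + t) + 2 * k)%N by lia.
rewrite [q ^+ (_ + m * _)]exprD exprM [q ^+ (_ + 2 * k)]exprD -mulrA.
have q_ge0 : 0 <= q by lra.
have qm_ge0 : 0 <= q * qint F m by rewrite mulr_ge0 ?(le_trans (ler0n _ m) (qint_ge m)).
rewrite ler_wpM2l ?exprn_ge0 // -exprMn.
by apply: lerXn2r; rewrite ?nnegrE ?exprn_ge0 ?exp_le_mul_qint.
Qed.

End QInteger.

Theorem lemma8p21 (F : finFieldType) (hF : 2%N \notin [pchar F])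
  (eps : F) (heps : forall y : F, y ^+ 2 != eps) (fam : ofamily)
  (a : nat) (mu : 'M[F]_(odim fam a)) (hmu : mu \in Ogrp eps fam a)
  (b : nat) (nu : 'M[F]_(odim fam b)) (hnu : nu \in Ogrp eps fam b)
  (c : nat) (la : 'M[F]_(odim fam c)) (hla : la \in Ogrp eps fam c)
  (r : {poly rat})
  (hr : forall (m : nat) (z : 'M[F]_(odim fam m)),
      (0 < m)%N -> z \in Ogrp eps fam m -> @same_type F eps fam m c z la ->
      @conv F eps fam m (@Xelt F eps fam a mu m) (@Xelt F eps fam b nu m) z = r.[qint F m]) :
  r != 0 ->
  ((size r)%:Z - 1 <= 2 * ((mtsize mu)%:Z + (mtsize nu)%:Z - (mtsize la)%:Z))%R.
Proof.
move=> r0; have eps0 : eps != 0 by apply: contraNneq (heps 0) => ->; rewrite expr2 mul0r.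
pose M0 := maxn c 1; pose z m := emb m la.
have zO m : (M0 <= m)%N -> z m \in Ogrp eps fam m.
  by move=> Mm; apply/emb_Ogrp/hla; apply: leq_trans (leq_maxl _ _) Mm.
have conv_r m : (M0 <= m)%N ->
    conv eps (Xelt eps mu (m := m)) (Xelt eps nu (m := m)) (z m) = r.[qint F m].
  move=> Mm; apply: hr; [exact: leq_trans (leq_maxr _ _) Mm | exact: zO |].
  by apply: same_type_emb; apply: leq_trans (leq_maxl _ _) Mm.
have mtsize_z m : (M0 <= m)%N -> mtsize (z m) = mtsize la.
  by move=> Mm; apply: mtsize_emb; apply: leq_trans (leq_maxl _ _) Mm.
have [la_le|la_gt] := leqP (mtsize la) (mtsize mu + mtsize nu); last first.
  case/eqP: r0; apply: (@poly_eq0_of_roots _ _ _ M0 (qint_unbounded F)) => m Mm.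
  by rewrite -conv_r // (conv_Xelt_eq0 eps0) ?mtsize_z.
set k := (mtsize mu + mtsize nu - mtsize la)%N; set s := (mtsize la + k)%N.
have : ((size r).-1 <= 2 * k)%N.
  apply: (size_poly_le_of_bound (M0 := M0) (K := (#|F| ^ (3 * k + s * s))%:R) r0 (qint_unbounded F)).
  move=> m Mm; rewrite -conv_r // ger0_norm; last exact: conv_Xelt_ge0.
  apply: le_trans (conv_Xelt_le eps0 mu nu (z m)) _.
  rewrite mxrank_tr -/(mtsize _) mtsize_z // -/k -/s.
  apply: card_exp_le_qint; first exact: leq_trans (leq_maxr _ _) Mm.
  by rewrite leq_add2r leq_mul2l odim_le_double orbT.
have := size_poly_gt0 r; rewrite r0 /k; lia.
Qed.
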